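(* Let $S$ be a semigroup generated by a finite set $A$, and let $\eta$ be a congruence on $S$. Then the natural map $\phi:(S,d_A)\to(S/\eta,d_{A/\eta})$, $s\mapsto s/\eta$, is a quasi-isometry if and only if there is a finite bound on the $d_A$-diameters of the $\eta$-classes of $S$.
   Context: For a semigroup $T$ generated by a finite set $B$, $d_B(x,y)=\inf\{|w|:w\in B^*,\ xw=y\}$ ($B^*$ the free monoid on $B$, $\inf\emptyset=\infty$). Here $A/\eta=\{a/\eta:a\in A\}$, a finite generating set of $S/\eta$. The $d_A$-diameter of a set $C\subseteq S$ is $\sup_{x,y\in C}d_A(x,y)$. A map $f:(X,d)\to(X',d')$ is a quasi-isometry if there are $1\le\lambda<\infty$, $0<\epsilon<\infty$, $0\le\mu<\infty$ with $\frac1\lambda d(x,y)-\epsilon\le d'(f(x),f(y))\le\lambda d(x,y)+\epsilon$ for all $x,y$, and for every $x'\in X'$ some $x$ with $\max(d'(x',f(x)),d'(f(x),x'))\le\mu$. *)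

From Stdlib Require Import Reals List ClassicalEpsilon.
From Coquelicot Require Import Coquelicot.
Import ListNotations.
Open Scope R_scope.

Section Defs.
Context {T : Type} (mul : T -> T -> T).

Definition act_word (x : T) (w : list T) : T := List.fold_left mul w x.

Definition word_over (B : list T) (w : list T) : Prop := List.Forall (fun b => In b B) w.

Definition generates (B : list T) : Prop :=
  forall s : T, exists a w, In a B /\ word_over B w /\ s = act_word a w.

(* d_B(x,y) = inf { |w| : w in B^*, x w = y }, with inf of the empty set = +oo *)
Definition word_dist (B : list T) (x y : T) : Rbar :=
  Glb_Rbar (fun r => exists w, word_over B w /\ act_word x w = y /\ r = INR (List.length w)).
End Defs.

Definition associative_op {S : Type} (mul : S -> S -> S) : Prop :=
  forall a b c, mul a (mul b c) = mul (mul a b) c.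

Definition congruence {S : Type} (mul : S -> S -> S) (eta : S -> S -> Prop) : Prop :=
  (forall a, eta a a) /\ (forall a b, eta a b -> eta b a) /\
  (forall a b c, eta a b -> eta b c -> eta a c) /\
  (forall a b c, eta a b -> eta (mul c a) (mul c b) /\ eta (mul a c) (mul b c)).

Definition quot {S : Type} (eta : S -> S -> Prop) : Type :=
  {P : S -> Prop | exists s, P = eta s}.

Definition cls {S : Type} (eta : S -> S -> Prop) (s : S) : quot eta :=
  exist _ (eta s) (ex_intro _ s eq_refl).

Definition rep {S : Type} {eta : S -> S -> Prop} (P : quot eta) : S :=
  proj1_sig (constructive_indefinite_description _ (proj2_sig P)).

Definition qmul {S : Type} (mul : S -> S -> S) (eta : S -> S -> Prop)
  (P Q : quot eta) : quot eta := cls eta (mul (rep P) (rep Q)).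

Definition qgens {S : Type} (eta : S -> S -> Prop) (A : list S) : list (quot eta) :=
  List.map (cls eta) A.

Definition quasi_isometry {X X' : Type} (d : X -> X -> Rbar) (d' : X' -> X' -> Rbar)
  (f : X -> X') : Prop :=
  exists lam eps mu : R, 1 <= lam /\ 0 < eps /\ 0 <= mu /\
    (forall x y : X,
       Rbar_le (Rbar_minus (Rbar_mult (/ lam) (d x y)) eps) (d' (f x) (f y)) /\
       Rbar_le (d' (f x) (f y)) (Rbar_plus (Rbar_mult lam (d x y)) eps)) /\
    (forall x' : X', exists x : X,
       Rbar_le (d' x' (f x)) mu /\ Rbar_le (d' (f x) x') mu).

Definition bounded_class_diameters {S : Type} (mul : S -> S -> S) (A : list S)
  (eta : S -> S -> Prop) : Prop :=
  exists K : R, forall x y : S, eta x y -> Rbar_le (word_dist mul A x y) K.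

(* The quotient map is 1-Lipschitz, since a word over [A] maps to a word over [A/eta]
   of the same length, and it is surjective, so only the lower bound is at stake.
   If the eta-classes have diameter at most [K], a word from [x/eta] to [y/eta] lifts
   to a word from [x] to some [y' ~ y], which is completed to a word ending at [y] at
   a cost of less than [K + 1]; hence [d_A(x,y) <= d(x/eta, y/eta) + K + 1].
   Conversely, for [x ~ y] the images coincide, so the quasi-isometric lower bound
   gives [d_A(x,y) <= lam * eps]. *)
From Stdlib Require Import Reals List Lra Classical FunctionalExtensionality PropExtensionality ProofIrrelevance.
From Coquelicot Require Import Coquelicot.
Import ListNotations.
Open Scope R_scope.

Section WordDistance.
Context {T : Type} (mul : T -> T -> T) (B : list T).

Let words_between x y r :=
  exists w, word_over B w /\ act_word mul x w = y /\ r = INR (length w).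

Lemma word_dist_le_length x w :
  word_over B w -> Rbar_le (word_dist mul B x (act_word mul x w)) (INR (length w)).
Proof.
  intros Hw. apply (proj1 (Glb_Rbar_correct (words_between x _))).
  exists w. auto.
Qed.

Lemma word_dist_refl_le0 x : Rbar_le (word_dist mul B x x) 0.
Proof. exact (word_dist_le_length x [] (Forall_nil _)). Qed.

Lemma word_dist_lower_bound x y (r : R) :
  (forall w, word_over B w -> act_word mul x w = y -> r <= INR (length w)) ->
  Rbar_le r (word_dist mul B x y).
Proof.
  intros Hr. apply (proj2 (Glb_Rbar_correct (words_between x y))).
  intros q [w [Hw [Hxy ->]]]. exact (Hr w Hw Hxy).
Qed.

Lemma word_dist_ge0 x y : Rbar_le 0 (word_dist mul B x y).
Proof. apply word_dist_lower_bound. intros w _ _. apply pos_INR. Qed.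

Lemma word_dist_le_witness x y (K : R) :
  Rbar_le (word_dist mul B x y) K ->
  exists w, word_over B w /\ act_word mul x w = y /\ INR (length w) < K + 1.
Proof.
  intros HK. apply NNPP. intros Hno.
  assert (Hlow : Rbar_le (K + 1) (word_dist mul B x y)).
  { apply word_dist_lower_bound. intros w Hw Hxy.
    apply Rnot_lt_le. intros Hlt. apply Hno. eauto. }
  destruct (word_dist mul B x y); simpl in *; lra.
Qed.

End WordDistance.

Lemma word_dist_le_plus {T T' : Type} (m : T -> T -> T) (m' : T' -> T' -> T')
  (B : list T) (B' : list T') x y x' y' (c : R) :
  (forall v, word_over B' v -> act_word m' x' v = y' ->
     exists u, word_over B u /\ act_word m x u = y /\ INR (length u) <= INR (length v) + c) ->
  Rbar_le (word_dist m B x y) (Rbar_plus (word_dist m' B' x' y') c).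
Proof.
  intros Hpaths.
  pose proof (word_dist_ge0 m' B' x' y') as Hd'0.
  destruct (word_dist m' B' x' y') as [r| |] eqn:Ed'; simpl in Hd'0 |- *;
    [| now destruct (word_dist m B x y) | contradiction].
  assert (Hr : Rbar_le (word_dist m' B' x' y') r) by (rewrite Ed'; simpl; lra).
  destruct (word_dist_le_witness m' B' x' y' r Hr) as [v [Hv [Hxy' _]]].
  destruct (Hpaths v Hv Hxy') as [u [Hu [Hxy _]]].
  pose proof (word_dist_ge0 m B x y) as Hd0.
  pose proof (word_dist_le_length m B x u Hu) as Hdu. rewrite Hxy in Hdu.
  destruct (word_dist m B x y) as [s| |] eqn:Ed; simpl in Hd0, Hdu |- *;
    try contradiction; auto.
  assert (Hlow : Rbar_le (s - c) (word_dist m' B' x' y')).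
  { apply word_dist_lower_bound. intros w Hw Hxyw.
    destruct (Hpaths w Hw Hxyw) as [u' [Hu' [Hxy'' Hlen]]].
    pose proof (word_dist_le_length m B x u' Hu') as Hdu'.
    rewrite Hxy'', Ed in Hdu'. simpl in Hdu'. lra. }
  rewrite Ed' in Hlow. simpl in Hlow. lra.
Qed.

Section Quotient.
Context {S : Type} (mul : S -> S -> S) (eta : S -> S -> Prop).
Hypothesis eta_congruence : congruence mul eta.

Lemma quot_eq (P Q : quot eta) : proj1_sig P = proj1_sig Q -> P = Q.
Proof. destruct P, Q; simpl; intros ->; f_equal; apply proof_irrelevance. Qed.

Lemma cls_eq s t : eta s t -> cls eta s = cls eta t.
Proof.
  destruct eta_congruence as [_ [Hsym [Htrans _]]]. intros Hst. apply quot_eq; simpl.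
  apply functional_extensionality; intros z; apply propositional_extensionality.
  split; eauto.
Qed.

Lemma eq_cls s t : cls eta s = cls eta t -> eta s t.
Proof.
  destruct eta_congruence as [Hrefl _]. intros Hst.
  apply (f_equal (@proj1_sig _ _)) in Hst. simpl in Hst. rewrite Hst. apply Hrefl.
Qed.

Lemma cls_rep (P : quot eta) : cls eta (rep P) = P.
Proof.
  apply quot_eq; simpl. unfold rep.
  destruct (ClassicalEpsilon.constructive_indefinite_description _ _); simpl; auto.
Qed.

Lemma qmul_cls s t : qmul mul eta (cls eta s) (cls eta t) = cls eta (mul s t).
Proof.
  destruct eta_congruence as [_ [_ [Htrans Hcompat]]].
  assert (Hrep : forall u, eta (rep (cls eta u)) u)
    by (intros u; apply eq_cls, cls_rep).
  unfold qmul. apply cls_eq.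
  apply Htrans with (mul s (rep (cls eta t))).
  - exact (proj2 (Hcompat _ _ _ (Hrep s))).
  - exact (proj1 (Hcompat _ _ _ (Hrep t))).
Qed.

Lemma act_word_cls s u :
  act_word (qmul mul eta) (cls eta s) (map (cls eta) u) = cls eta (act_word mul s u).
Proof.
  unfold act_word. revert s; induction u as [|a u IH]; intros s; simpl; auto.
  rewrite qmul_cls. apply IH.
Qed.

Lemma word_over_qgens_map (A u : list S) :
  word_over A u -> word_over (qgens eta A) (map (cls eta) u).
Proof. induction 1; simpl; constructor; auto. apply in_map; auto. Qed.

Lemma word_over_qgens_lift (A : list S) v :
  word_over (qgens eta A) v -> exists u, word_over A u /\ map (cls eta) u = v.
Proof.
  induction 1 as [|b v Hb _ [u [Hu <-]]].
  - exists []. split; [constructor | reflexivity].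
  - apply in_map_iff in Hb. destruct Hb as [a [<- Ha]].
    exists (a :: u). split; [constructor; auto | reflexivity].
Qed.

End Quotient.

Lemma Rbar_mult_1_l (x : Rbar) : Rbar_mult 1 x = x.
Proof.
  destruct x as [r| |].
  - simpl; f_equal; ring.
  - apply is_Rbar_mult_unique, is_Rbar_mult_sym, is_Rbar_mult_p_infty_pos. simpl; lra.
  - apply is_Rbar_mult_unique, is_Rbar_mult_sym, is_Rbar_mult_m_infty_pos. simpl; lra.
Qed.

Lemma Rbar_le_of_inv_mult_minus_le0 (lam eps : R) (d : Rbar) : 0 < lam ->
  Rbar_le (Rbar_minus (Rbar_mult (/ lam) d) eps) 0 -> Rbar_le d (lam * eps).
Proof.
  intros Hlam Hle. destruct d as [r| |]; [simpl in * | | exact I].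
  - apply Rmult_le_reg_l with (/ lam); [now apply Rinv_0_lt_compat|].
    rewrite <- Rmult_assoc, Rinv_l, Rmult_1_l by lra. lra.
  - rewrite (is_Rbar_mult_unique _ _ _ (is_Rbar_mult_sym _ _ _
      (is_Rbar_mult_p_infty_pos (/ lam) (Rinv_0_lt_compat _ Hlam)))) in Hle.
    exact Hle.
Qed.

Section QuotientMetric.
Context {S : Type} (mul : S -> S -> S) (A : list S) (eta : S -> S -> Prop).
Hypothesis eta_congruence : congruence mul eta.

Notation d := (word_dist mul A).
Notation dq := (word_dist (qmul mul eta) (qgens eta A)).

Lemma word_dist_cls_le x y : Rbar_le (dq (cls eta x) (cls eta y)) (d x y).
Proof.
  rewrite <- (Rbar_plus_0_r (d x y)).
  apply word_dist_le_plus. intros u Hu Hxy.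
  exists (map (cls eta) u). split; [now apply word_over_qgens_map|]. split.
  - now rewrite (act_word_cls mul eta eta_congruence), Hxy.
  - rewrite length_map. lra.
Qed.

(* A path [v] between the classes lifts to a path from [x] into the class of [y];
   finish it inside that class with a path of length less than [K + 1]. *)
Lemma word_dist_le_cls_plus (K : R) x y :
  (forall s t, eta s t -> Rbar_le (d s t) K) ->
  Rbar_le (d x y) (Rbar_plus (dq (cls eta x) (cls eta y)) (K + 1)).
Proof.
  intros HK. apply word_dist_le_plus. intros v Hv Hxy.
  destruct (word_over_qgens_lift eta A v Hv) as [u [Hu <-]].
  rewrite (act_word_cls mul eta eta_congruence) in Hxy.
  apply (eq_cls mul eta eta_congruence), HK in Hxy.
  destruct (word_dist_le_witness mul A _ _ K Hxy) as [w [Hw [Huw Hlen]]].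
  exists (u ++ w). split; [now apply Forall_app|]. split.
  - unfold act_word in *. now rewrite fold_left_app.
  - rewrite length_app, plus_INR, length_map. lra.
Qed.

Lemma bounded_class_diameters_of_quasi_isometry :
  quasi_isometry d dq (cls eta) -> bounded_class_diameters mul A eta.
Proof.
  intros [lam [eps [_ [Hlam [_ [_ [Hdist _]]]]]]].
  exists (lam * eps). intros x y Hxy.
  apply Rbar_le_of_inv_mult_minus_le0; [lra|].
  eapply Rbar_le_trans; [apply (Hdist x y)|].
  rewrite <- (cls_eq mul eta eta_congruence x y Hxy).
  apply word_dist_refl_le0.
Qed.

Lemma bounded_class_diameters_nonneg :
  bounded_class_diameters mul A eta ->
  exists K, 0 <= K /\ forall x y, eta x y -> Rbar_le (d x y) K.
Proof.
  intros [K HK]. exists (Rmax K 0). split; [apply Rmax_r|].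
  intros x y Hxy. eapply Rbar_le_trans; [apply HK, Hxy | apply Rmax_l].
Qed.

Lemma quasi_isometry_of_bounded_class_diameters :
  bounded_class_diameters mul A eta -> quasi_isometry d dq (cls eta).
Proof.
  intros Hbdd. destruct (bounded_class_diameters_nonneg Hbdd) as [K [HK0 HK]].
  exists 1, (K + 1), 0. repeat split; try lra.
  - rewrite Rinv_1, Rbar_mult_1_l.
    pose proof (word_dist_le_cls_plus K x y HK) as Hle.
    pose proof (word_dist_ge0 (qmul mul eta) (qgens eta A) (cls eta x) (cls eta y)).
    destruct (d x y), (dq (cls eta x) (cls eta y)); simpl in *; auto; lra.
  - rewrite Rbar_mult_1_l.
    eapply Rbar_le_trans; [apply word_dist_cls_le|].
    pose proof (word_dist_ge0 mul A x y).
    destruct (d x y); simpl in *; auto; lra.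
  - intros P. exists (rep P). rewrite (cls_rep eta). split; apply word_dist_refl_le0.
Qed.

End QuotientMetric.

Theorem proposition8p3 (S : Type) (mul : S -> S -> S) (A : list S)
  (eta : S -> S -> Prop) :
  associative_op mul -> generates mul A -> congruence mul eta ->
  (quasi_isometry (word_dist mul A) (word_dist (qmul mul eta) (qgens eta A)) (cls eta)
   <-> bounded_class_diameters mul A eta).
Proof.
  intros _ _ Heta. split.
  - exact (bounded_class_diameters_of_quasi_isometry mul A eta Heta).
  - exact (quasi_isometry_of_bounded_class_diameters mul A eta Heta).
Qed.
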